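(* Let $0<q<1$, let $n$ be a positive integer and let $s>1$ be real. Then \[ n\,\zeta[\{s\}^n] = \sum_{k=1}^n (-1)^{k+1}\,\zeta[\{s\}^{n-k}] \sum_{j=0}^{k-1}\binom{k-1}{j}(1-q)^j\,\zeta[ks-j]. \]
   Context: Fix a real number $q$ with $0<q<1$. For real $x$ put $[x]_q := (1-q^x)/(1-q)$ (so $[n]_q=1+q+\cdots+q^{n-1}$ for integers $n\ge 0$). For an integer $m\ge1$ and real numbers $s_1,\dots,s_m$ with $s_1>1$ and $s_j\ge 1$ for $2\le j\le m$, the multiple $q$-zeta function is $\zeta[s_1,\dots,s_m] := \sum_{k_1>k_2>\cdots>k_m>0}\prod_{j=1}^m \frac{q^{(s_j-1)k_j}}{[k_j]_q^{s_j}}$, the sum being over positive integers; for the empty argument list, $\zeta[\,]:=1$. The notation $\{s\}^n$ in an argument list denotes $n$ consecutive copies of $s$ (empty if $n=0$). *)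

From Stdlib Require Import Reals List.
From Coquelicot Require Import Coquelicot.
Open Scope R_scope.

Definition qnum (q x : R) : R := (1 - Rpower q x) / (1 - q).

Definition qterm (q s : R) (k : nat) : R :=
  Rpower q ((s - 1) * INR k) / Rpower (qnum q (INR k)) s.

(* Truncated multiple q-zeta sum:
   qzetaN q [s1;...;sm] N = sum over N >= k1 > k2 > ... > km > 0
   of prod_j qterm q sj kj; the empty list gives 1. *)
Fixpoint qzetaN (q : R) (l : list R) (N : nat) : R :=
  match l with
  | nil => 1
  | s :: l' => sum_n_m (fun k => qterm q s k * qzetaN q l' (k - 1)%nat) 1 N
  end.

Definition qzeta (q : R) (l : list R) : R := real (Lim_seq (qzetaN q l)).

(* Every truncation qzetaN q (repeat s j) N is the elementary symmetric function e_j of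
   x_k = qterm q s k (1 <= k <= N), so Newton's identity n e_n = sum_k (-1)^(k+1) e_(n-k) p_k
   holds for each N. Since (1 - q) [k]_q + q^k = 1, the power sum p_K is
   sum_k x_k^K ((1 - q) [k]_q + q^k)^(K-1), and the binomial expansion turns each summand into
   C(K-1, j) (1 - q)^j qterm q (K s - j) k, so p_K is a combination of truncations of
   zeta[K s - j]. The terms qterm q t k are dominated by (q^(t-1))^k, so every series involved
   converges and the identity passes to the limit N -> oo. *)

From Stdlib Require Import Reals List Lia Lra.
From Coquelicot Require Import Coquelicot.
Open Scope R_scope.

(* Coquelicot's [sum_n_m_mult_l] lives on the ring instance of [R]; restated on the default
   instance so that its right-hand side can be rewritten with other lemmas about real sums. *)
Lemma sum_n_m_Rmult_l (c : R) (u : nat -> R) n m :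
  sum_n_m (fun k => c * u k) n m = c * sum_n_m u n m.
Proof. exact (sum_n_m_mult_l c u n m). Qed.

Lemma sum_n_Rmult_l (c : R) (u : nat -> R) n :
  sum_n (fun k => c * u k) n = c * sum_n u n.
Proof. apply sum_n_m_Rmult_l. Qed.

Lemma sum_n_m_le_loc (u v : nat -> R) n m :
  (forall k, (n <= k <= m)%nat -> u k <= v k) -> sum_n_m u n m <= sum_n_m v n m.
Proof.
  intro Huv. destruct (Compare_dec.le_lt_dec n m) as [Hnm | Hmn].
  - induction Hnm as [|m Hnm IH].
    + rewrite !sum_n_n. apply Huv; lia.
    + rewrite !sum_n_Sm by lia.
      apply Rplus_le_compat; [apply IH | apply Huv]; intros; try apply Huv; lia.
  - rewrite !sum_n_m_zero by exact Hmn. apply Rle_refl.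
Qed.

Lemma sum_n_m_sum_n_swap (u : nat -> nat -> R) n m K :
  sum_n_m (fun k => sum_n (fun j => u j k) K) n m = sum_n (fun j => sum_n_m (u j) n m) K.
Proof.
  induction K as [|K IH].
  - rewrite sum_O. apply sum_n_m_ext. intro k. apply sum_O.
  - rewrite sum_Sn, <- IH, <- sum_n_m_plus. apply sum_n_m_ext. intro k. apply sum_Sn.
Qed.

Lemma is_lim_seq_sum_n_m (u : nat -> nat -> R) (l : nat -> R) n m :
  (forall k, (n <= k <= m)%nat -> is_lim_seq (u k) (l k)) ->
  is_lim_seq (fun N => sum_n_m (fun k => u k N) n m) (sum_n_m l n m).
Proof.
  intro Hu. destruct (Compare_dec.le_lt_dec n m) as [Hnm | Hmn].
  - induction Hnm as [|m Hnm IH].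
    + rewrite sum_n_n.
      apply is_lim_seq_ext with (u n); [intro N; now rewrite sum_n_n | apply Hu; lia].
    + rewrite sum_n_Sm by lia.
      apply is_lim_seq_ext with (fun N => sum_n_m (fun k => u k N) n m + u (S m) N).
      * intro N. now rewrite sum_n_Sm by lia.
      * apply is_lim_seq_plus'; [apply IH | apply Hu]; intros; try apply Hu; lia.
  - rewrite sum_n_m_zero by exact Hmn.
    apply is_lim_seq_ext with (fun _ => 0).
    + intro N. now rewrite sum_n_m_zero.
    + apply is_lim_seq_const.
Qed.

Lemma geometric_partial_sum_le r N : 0 <= r < 1 -> sum_n_m (pow r) 1 N <= / (1 - r).
Proof.
  intro Hr.
  assert (Hsum : sum_n (pow r) N = (1 - r ^ S N) / (1 - r)).
  { rewrite sum_n_Reals. apply tech3. lra. }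
  assert (0 <= r ^ S N) by (apply pow_le; lra).
  assert (Hle : sum_n_m (pow r) 1 N <= sum_n (pow r) N).
  { destruct N as [|N]; [rewrite sum_n_m_zero by lia; rewrite sum_O; simpl; unfold zero; simpl; lra|].
    unfold sum_n. rewrite (sum_Sn_m _ 0) by lia. unfold plus; simpl. lra. }
  rewrite Hsum in Hle. apply (Rle_trans _ _ _ Hle).
  rewrite <- (Rmult_1_l (/ (1 - r))).
  apply Rmult_le_compat_r; [apply Rlt_le, Rinv_0_lt_compat |]; lra.
Qed.

Definition lag (f : nat -> R) (j : nat) : R :=
  match j with O => 0 | S j' => f j' end.

Lemma alternating_sum_pow_lag (f : nat -> R) (x : R) m :
  sum_n (fun i => (-1) ^ i * x ^ S i * (f (m - i)%nat + x * lag f (m - i))) m = x * f m.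
Proof.
  induction m as [|m IH].
  - rewrite sum_O. simpl. ring.
  - unfold sum_n in IH |- *. rewrite sum_Sn_m, <- sum_n_m_S by lia.
    rewrite (sum_n_m_ext _ (fun i => - x *
      ((-1) ^ i * x ^ S i * (f (m - i)%nat + x * lag f (m - i))))).
    + rewrite sum_n_m_Rmult_l, IH. unfold plus; simpl. ring.
    + intro i. simpl. ring.
Qed.

Section ElementarySymmetric.

Variable a : nat -> R.

(* [esym N j] and [psum N k] are e_j and p_k of a 1, ..., a N. *)
Fixpoint esym (N j : nat) : R :=
  match N, j with
  | _, O => 1
  | O, S _ => 0
  | S N', S j' => esym N' (S j') + a (S N') * esym N' j'
  end.

Definition psum (N k : nat) : R := sum_n_m (fun m => a m ^ k) 1 N.

Lemma esym_S N j : esym (S N) j = esym N j + a (S N) * lag (esym N) j.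
Proof. destruct j; simpl; [destruct N|]; simpl; ring. Qed.

Lemma psum_0 k : psum 0 k = 0.
Proof. unfold psum. rewrite sum_n_m_zero by lia. reflexivity. Qed.

Lemma psum_S N k : psum (S N) k = psum N k + a (S N) ^ k.
Proof. unfold psum. rewrite sum_n_Sm by lia. reflexivity. Qed.

Lemma newton_identity_sum_n N m :
  sum_n (fun i => (-1) ^ i * esym N (m - i) * psum N (S i)) m = INR (S m) * esym N (S m).
Proof.
  revert m; induction N as [|N IH]; intro m.
  - rewrite (sum_n_ext _ (fun _ => 0)), sum_n_const.
    + simpl. ring.
    + intro i. rewrite psum_0. apply Rmult_0_r.
  - set (x := a (S N)).
    assert (Hlag : sum_n (fun i => (-1) ^ i * lag (esym N) (m - i) * psum N (S i)) m
                   = INR m * esym N m).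
    { destruct m as [|m].
      - rewrite sum_O. simpl. ring.
      - rewrite sum_Sn, Nat.sub_diag, <- IH.
        rewrite (sum_n_ext_loc _ (fun i => (-1) ^ i * esym N (m - i) * psum N (S i))).
        + unfold plus; simpl. ring.
        + intros i Hi. now rewrite Nat.sub_succ_l. }
    rewrite (sum_n_ext _ (fun i => plus
        (plus ((-1) ^ i * esym N (m - i) * psum N (S i))
              (x * ((-1) ^ i * lag (esym N) (m - i) * psum N (S i))))
        ((-1) ^ i * x ^ S i * (esym N (m - i) + x * lag (esym N) (m - i))))).
    2: { intro i. rewrite esym_S, psum_S. fold x. unfold plus; simpl. ring. }
    rewrite !sum_n_plus, sum_n_Rmult_l, IH, Hlag, alternating_sum_pow_lag.
    rewrite (esym_S N (S m)), S_INR. fold x. unfold plus; simpl. ring.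
Qed.

Lemma newton_identity N n : (1 <= n)%nat ->
  INR n * esym N n = sum_n_m (fun k => (-1) ^ (k + 1) * esym N (n - k) * psum N k) 1 n.
Proof.
  intro Hn. destruct n as [|m]; [lia|].
  rewrite <- newton_identity_sum_n, <- sum_n_m_S. apply sum_n_m_ext. intro i.
  replace (S i + 1)%nat with (i + 2)%nat by lia. rewrite pow_add. simpl. ring.
Qed.

Hypothesis a_ge0 : forall k, 0 <= a k.

Lemma esym_ge0 N j : 0 <= esym N j.
Proof.
  revert j; induction N as [|N IH]; intro j; destruct j; simpl; try lra.
  pose proof (IH (S j)); pose proof (IH j); pose proof (a_ge0 (S N)). nra.
Qed.

Lemma esym_le_S N j : esym N j <= esym (S N) j.
Proof.
  rewrite esym_S. assert (0 <= lag (esym N) j) by (destruct j; simpl; [lra | apply esym_ge0]).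
  pose proof (a_ge0 (S N)). nra.
Qed.

Lemma sum_n_m_ge0 N : 0 <= sum_n_m a 1 N.
Proof.
  rewrite <- (Rmult_0_r (INR (S N - 1))), <- sum_n_m_const.
  apply sum_n_m_le. exact a_ge0.
Qed.

Lemma esym_le_pow N j : esym N j <= (sum_n_m a 1 N) ^ j.
Proof.
  revert j; induction N as [|N IH]; intro j.
  - rewrite sum_n_m_zero by lia. destruct j; simpl; unfold zero; simpl; lra.
  - rewrite sum_n_Sm by lia. unfold plus; simpl.
    pose proof (sum_n_m_ge0 N) as HS. pose proof (a_ge0 (S N)) as Hx.
    set (S0 := sum_n_m a 1 N) in *. set (x := a (S N)) in *.
    destruct j as [|j]; simpl; [lra|].
    pose proof (IH (S j)) as H1. pose proof (IH j) as H2. simpl in H1.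
    assert (S0 ^ j <= (S0 + x) ^ j) by (apply pow_incr; lra).
    assert (0 <= S0 ^ j) by (apply pow_le; lra).
    nra.
Qed.

End ElementarySymmetric.

Lemma Rpower_gt_0 x y : 0 < Rpower x y.
Proof. apply exp_pos. Qed.

Lemma Rpower_lt_1 q t : 0 < q < 1 -> 0 < t -> Rpower q t < 1.
Proof.
  intros Hq Ht. rewrite <- exp_0. apply exp_increasing.
  assert (ln q < 0) by (rewrite <- ln_1; apply ln_increasing; lra).
  nra.
Qed.

Lemma qnum_nat q m : 0 < q -> qnum q (INR m) = (1 - q ^ m) / (1 - q).
Proof. intro Hq. unfold qnum. now rewrite Rpower_pow. Qed.

Lemma qnum_ge_1 q m : 0 < q < 1 -> (1 <= m)%nat -> 1 <= qnum q (INR m).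
Proof.
  intros Hq Hm. rewrite qnum_nat by lra.
  destruct m as [|m]; [lia|].
  assert (q ^ m <= 1) by (rewrite <- (pow1 m); apply pow_incr; lra).
  apply (Rmult_le_reg_r (1 - q)); [lra|].
  unfold Rdiv. rewrite Rmult_assoc, Rinv_l by lra. simpl. nra.
Qed.

Lemma qterm_gt_0 q t m : 0 < qterm q t m.
Proof. apply Rdiv_lt_0_compat; apply Rpower_gt_0. Qed.

Lemma qterm_le_geometric q t m : 0 < q < 1 -> 0 <= t -> (1 <= m)%nat ->
  qterm q t m <= Rpower q (t - 1) ^ m.
Proof.
  intros Hq Ht Hm. unfold qterm.
  rewrite <- Rpower_pow, Rpower_mult by apply Rpower_gt_0.
  assert (H1 : 1 <= Rpower (qnum q (INR m)) t).
  { pose proof (qnum_ge_1 q m Hq Hm).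
    rewrite <- (Rpower_O (qnum q (INR m))) by lra. apply Rle_Rpower; lra. }
  pose proof (Rpower_gt_0 q ((t - 1) * INR m)).
  unfold Rdiv. rewrite <- (Rmult_1_r (Rpower q _)) at 2.
  apply Rmult_le_compat_l; [lra|].
  rewrite <- Rinv_1. apply Rinv_le_contravar; lra.
Qed.

Lemma qterm_partial_sum_le q t N : 0 < q < 1 -> 1 < t ->
  sum_n_m (qterm q t) 1 N <= / (1 - Rpower q (t - 1)).
Proof.
  intros Hq Ht. eapply Rle_trans.
  - apply (sum_n_m_le_loc _ (pow (Rpower q (t - 1)))). intros k Hk.
    apply qterm_le_geometric; lra || lia.
  - apply geometric_partial_sum_le. split; [apply Rlt_le, Rpower_gt_0 | apply Rpower_lt_1; lra].
Qed.

Lemma qterm_shift q s K j m : 0 < q < 1 -> (1 <= m)%nat -> (j <= K)%nat ->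
  qterm q (INR (S K) * s - INR j) m
  = qterm q s m ^ S K * qnum q (INR m) ^ j * (q ^ m) ^ (K - j).
Proof.
  intros Hq Hm Hj. unfold qterm.
  set (Q := qnum q (INR m)). assert (HQ : 1 <= Q) by now apply qnum_ge_1.
  replace ((INR (S K) * s - INR j - 1) * INR m)
    with ((s - 1) * INR m * INR (S K) + INR (m * (K - j))).
  2: { rewrite mult_INR, minus_INR, S_INR by exact Hj. ring. }
  replace (INR (S K) * s - INR j) with (s * INR (S K) + - INR j) by ring.
  rewrite !Rpower_plus, <- (Rpower_mult q), <- (Rpower_mult Q), Rpower_Ropp.
  rewrite !Rpower_pow, pow_mult by (lra || apply Rpower_gt_0).
  assert (Rpower Q s ^ S K <> 0) by (apply pow_nonzero, Rgt_not_eq, Rpower_gt_0).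
  assert (Q ^ j <> 0) by (apply pow_nonzero; lra).
  unfold Rdiv. rewrite Rpow_mult_distr, pow_inv. field. tauto.
Qed.

Lemma qterm_pow_binomial q s K m : 0 < q < 1 -> (1 <= m)%nat ->
  qterm q s m ^ S K
  = sum_n (fun j => Binomial.C K j * (1 - q) ^ j * qterm q (INR (S K) * s - INR j) m) K.
Proof.
  intros Hq Hm.
  assert (Hone : (1 - q) * qnum q (INR m) + q ^ m = 1) by (rewrite qnum_nat; [field|]; lra).
  transitivity (qterm q s m ^ S K * ((1 - q) * qnum q (INR m) + q ^ m) ^ K).
  { rewrite Hone, pow1. ring. }
  rewrite binomial, <- sum_n_Reals, <- sum_n_Rmult_l. apply sum_n_ext_loc. intros j Hj.
  rewrite qterm_shift, Rpow_mult_distr by (lra || lia). simpl. ring.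
Qed.

Lemma shifted_weight_gt_1 s k j : 1 < s -> (1 <= k)%nat -> (j <= k - 1)%nat ->
  1 < INR k * s - INR j.
Proof.
  intros Hs Hk Hj.
  assert (1 <= INR k) by (apply (le_INR 1); lia).
  assert (INR j <= INR k - 1) by (rewrite <- INR_1, <- minus_INR by lia; now apply le_INR).
  nra.
Qed.

Lemma qzetaN_single q t N : qzetaN q (t :: nil) N = sum_n_m (qterm q t) 1 N.
Proof. apply sum_n_m_ext. intro k. apply Rmult_1_r. Qed.

Lemma qzetaN_repeat q s N j : qzetaN q (repeat s j) N = esym (qterm q s) N j.
Proof.
  revert j; induction N as [|N IH]; intro j; destruct j as [|j]; try reflexivity.
  simpl repeat. cbn [qzetaN]. rewrite sum_n_Sm by lia.
  change (sum_n_m (fun k => qterm q s k * qzetaN q (repeat s j) (k - 1)) 1 N)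
    with (qzetaN q (repeat s (S j)) N).
  rewrite IH. simpl (S N - 1)%nat. rewrite Nat.sub_0_r, IH. reflexivity.
Qed.

Lemma psum_qterm q s N K : 0 < q < 1 ->
  psum (qterm q s) N (S K)
  = sum_n (fun j => Binomial.C K j * (1 - q) ^ j
                    * qzetaN q (INR (S K) * s - INR j :: nil) N) K.
Proof.
  intro Hq. unfold psum.
  rewrite (sum_n_m_ext_loc _ (fun m => sum_n (fun j =>
     Binomial.C K j * (1 - q) ^ j * qterm q (INR (S K) * s - INR j) m) K)).
  - rewrite sum_n_m_sum_n_swap. apply sum_n_ext. intro j.
    now rewrite qzetaN_single, sum_n_m_Rmult_l.
  - intros m Hm. apply qterm_pow_binomial; [lra | lia].
Qed.

Lemma qzetaN_newton q s n N : 0 < q < 1 -> (1 <= n)%nat ->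
  INR n * qzetaN q (repeat s n) N =
  sum_n_m (fun k =>
      (-1) ^ (k + 1) * qzetaN q (repeat s (n - k)) N *
      sum_n (fun j => Binomial.C (k - 1) j * (1 - q) ^ j
                      * qzetaN q (INR k * s - INR j :: nil) N) (k - 1)) 1 n.
Proof.
  intros Hq Hn. rewrite qzetaN_repeat, newton_identity by exact Hn.
  apply sum_n_m_ext_loc. intros k Hk. destruct k as [|K]; [lia|].
  rewrite qzetaN_repeat, psum_qterm by exact Hq. now rewrite Nat.sub_succ, Nat.sub_0_r.
Qed.

Lemma qzeta_is_lim q l : ex_finite_lim_seq (qzetaN q l) -> is_lim_seq (qzetaN q l) (qzeta q l).
Proof. intros [x Hx]. unfold qzeta. now rewrite (is_lim_seq_unique _ _ Hx). Qed.

Lemma qzeta_repeat_is_lim q s j : 0 < q < 1 -> 1 < s ->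
  is_lim_seq (qzetaN q (repeat s j)) (qzeta q (repeat s j)).
Proof.
  intros Hq Hs. apply qzeta_is_lim.
  assert (Ha : forall k, 0 <= qterm q s k) by (intro; apply Rlt_le, qterm_gt_0).
  apply ex_finite_lim_seq_incr with ((/ (1 - Rpower q (s - 1))) ^ j); intro N;
    rewrite !qzetaN_repeat.
  - now apply esym_le_S.
  - apply (Rle_trans _ _ _ (esym_le_pow _ Ha N j)), pow_incr.
    split; [now apply sum_n_m_ge0 | now apply qterm_partial_sum_le].
Qed.

Theorem theorem2p1 (q : R) (n : nat) (s : R) :
  0 < q -> q < 1 -> (1 <= n)%nat -> 1 < s ->
  INR n * qzeta q (repeat s n) =
  sum_n_m (fun k =>
      (-1) ^ (k + 1) * qzeta q (repeat s (n - k)) *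
      sum_n (fun j => Binomial.C (k - 1) j * (1 - q) ^ j
                      * qzeta q (INR k * s - INR j :: nil)) (k - 1))
    1 n.
Proof.
  intros Hq0 Hq1 Hn Hs. assert (Hq : 0 < q < 1) by lra.
  set (u := fun N => INR n * qzetaN q (repeat s n) N).
  assert (Hlhs : is_lim_seq u (INR n * qzeta q (repeat s n))).
  { apply is_lim_seq_mult'; [apply is_lim_seq_const | now apply qzeta_repeat_is_lim]. }
  assert (Hrhs : is_lim_seq u (sum_n_m (fun k =>
      (-1) ^ (k + 1) * qzeta q (repeat s (n - k)) *
      sum_n (fun j => Binomial.C (k - 1) j * (1 - q) ^ j
                      * qzeta q (INR k * s - INR j :: nil)) (k - 1)) 1 n)).
  { apply is_lim_seq_ext with (1 := fun N => eq_sym (qzetaN_newton q s n N Hq Hn)).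
    apply is_lim_seq_sum_n_m. intros k Hk.
    apply is_lim_seq_mult'.
    - apply is_lim_seq_mult'; [apply is_lim_seq_const | now apply qzeta_repeat_is_lim].
    - apply is_lim_seq_sum_n_m. intros j Hj.
      apply is_lim_seq_mult'; [apply is_lim_seq_const |].
      apply (qzeta_repeat_is_lim q _ 1 Hq), shifted_weight_gt_1; lia || lra. }
  apply Rbar_finite_eq. now rewrite <- (is_lim_seq_unique _ _ Hlhs), (is_lim_seq_unique _ _ Hrhs).
Qed.
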